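(* Let $p$ be an odd prime, $\Gamma=\Gamma_0(N)$, $\mathcal O$ the ring of integers of a finite extension of $\mathbb Q_p$, $g\ge0$, and $\varphi\in H^1_c(\Gamma,V_g(\mathcal O))$. Then for every $n\ge1$ and $0\le i\le p-2$, $$\theta_{n,i}\Big(\varphi\big|\begin{pmatrix}p&0\\0&1\end{pmatrix}\Big)=p^g\cdot\nu^n_{n-1}\big(\theta_{n-1,i}(\varphi)\big).$$
   Context: $V_g(R)$: homogeneous degree-$g$ polynomials in $X,Y$ over $R$ with right action $(P|\gamma)(X,Y)=P(dX-cY,-bX+aY)$ for $\gamma=\begin{pmatrix}a&b\\c&d\end{pmatrix}$. $H^1_c(\Gamma',V_g(R))$ is identified with additive maps $\varphi:\mathrm{Div}^0(\mathbb P^1(\mathbb Q))\to V_g(R)$ with $\varphi(\gamma D)|\gamma=\varphi(D)$ for $\gamma\in\Gamma'$. For an integer matrix $\delta$ with positive determinant, $(\varphi|\delta)(D)=\varphi(\delta D)|\delta$ ($\delta$ acting on $\mathbb P^1(\mathbb Q)$ by Möbius transformations); $\varphi|\mathrm{diag}(p,1)$ is a modular symbol of level $\Gamma_0(Np)$. For $n\ge0$, $\mathcal G_n=\mathrm{Gal}(\mathbb Q(\mu_{p^n})/\mathbb Q)\cong(\mathbb Z/p^n)^\times$, $\sigma_a\leftrightarrow a$, $\vartheta_n(\varphi)=\sum_{a\in(\mathbb Z/p^n)^\times}\varphi(\{\infty\}-\{a/p^n\})|_{(X,Y)=(0,1)}\sigma_a$; with $\mathcal G_{n+1}\cong G_n\times(\mathbb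 Z/p)^\times$, $G_n$ cyclic of order $p^n$, $\omega$ Teichmüller, $\theta_{n,i}(\varphi)$ is the image of $\vartheta_{n+1}(\varphi)$ in $\mathcal O[G_n]$ under $(\tau,x)\mapsto\omega(x)^i\tau$. $\nu^n_{n-1}:\mathcal O[G_{n-1}]\to\mathcal O[G_n]$, $\sigma\mapsto\sum_{\tau\mapsto\sigma}\tau$. *)

From HB Require Import structures.
From mathcomp Require Import all_boot all_order all_algebra.
From mathcomp Require Import mpoly.
Set Implicit Arguments. Unset Strict Implicit. Unset Printing Implicit Defensive.
Import Order.TTheory GRing.Theory Num.Theory.
Local Open Scope ring_scope.

(* P^1(Q): None = infinity, Some q = q. *)
Definition P1 := option rat.
Definition infty : P1 := None.

Definition mat := 'M[int]_2.
Definition ma (m : mat) : int := m ord0 ord0.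
Definition mb (m : mat) : int := m ord0 ord_max.
Definition mc (m : mat) : int := m ord_max ord0.
Definition md (m : mat) : int := m ord_max ord_max.

Definition moeb (m : mat) (x : P1) : P1 :=
  match x with
  | None => if mc m == 0 then None else Some ((ma m)%:~R / (mc m)%:~R)
  | Some q =>
      let den := (mc m)%:~R * q + (md m)%:~R in
      if den == 0 then None else Some (((ma m)%:~R * q + (mb m)%:~R) / den)
  end.

Definition Gamma0 (N : nat) (m : mat) : bool :=
  (\det m == 1) && (N%:Z %| mc m)%Z.

Definition diagp1 (p : nat) : mat :=
  \matrix_(i < 2, j < 2) (if i == j then (if i == ord0 then p%:Z else 1) else 0).

(* V_g(R) is the set of g.-homog polynomials in {mpoly R[2]}, X = 'X_0, Y = 'X_1.
   Right action (P|m)(X,Y) = P(dX - cY, -bX + aY). *)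
Definition Xv {R : comNzRingType} : {mpoly R[2]} := 'X_(ord0 : 'I_2).
Definition Yv {R : comNzRingType} : {mpoly R[2]} := 'X_(ord_max : 'I_2).

Definition actV {R : comNzRingType} (m : mat) (P : {mpoly R[2]}) : {mpoly R[2]} :=
  P \mPo [tuple ((md m)%:~R *: Xv - (mc m)%:~R *: Yv);
                (- (mb m)%:~R *: Xv + (ma m)%:~R *: Yv)].

Definition ev01 {R : comNzRingType} (P : {mpoly R[2]}) : R :=
  P.@[fun i : 'I_2 => if i == ord0 then 0 else 1].

(* A modular symbol phi : Div^0(P^1(Q)) -> V_g(R) is encoded by its values
   phi r s := phi({r} - {s}); additivity on Div^0 is the cocycle relation. *)
Definition modsym (R : comNzRingType) := P1 -> P1 -> {mpoly R[2]}.

Definition is_modsym {R : comNzRingType} (N g : nat) (phi : modsym R) : Prop :=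
  [/\ forall r s, phi r s \is g.-homog,
      forall r s t, phi r s + phi s t = phi r t &
      forall gam, Gamma0 N gam -> forall r s,
        actV gam (phi (moeb gam r) (moeb gam s)) = phi r s].

Definition slash {R : comNzRingType} (phi : modsym R) (delta : mat) : modsym R :=
  fun r s => actV delta (phi (moeb delta r) (moeb delta s)).

(* Group rings O[G] for G a finite group of residues represented by natural
   numbers: an element is its coefficient function nat -> R (coefficients
   outside the group are 0). *)

(* (Z/p^m)^x = G_m (calligraphic), representatives 0 <= a < p^m. *)
Definition Ucal (p m : nat) : seq nat :=
  [seq a <- iota 0 (p ^ m) | coprime a (p ^ m)].

(* G_n = 1 + pZ mod p^(n+1), cyclic of order p^n, inside (Z/p^(n+1))^x;
   it is the quotient of (Z/p^(n+1))^x by mu_(p-1) via a |-> a/omega(a). *)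
Definition Gn (p n : nat) : seq nat :=
  [seq a <- Ucal p n.+1 | (a %% p == 1)%N].

Definition vartheta {R : comNzRingType} (p m : nat) (phi : modsym R) : nat -> R :=
  fun a => if a \in Ucal p m then
             ev01 (phi infty (Some (a%:R / (p ^ m)%:R)))
           else 0.

(* The isomorphism G_{n+1} = (Z/p^(n+1))^x ~ G_n x (Z/p)^x is
   a |-> (a * omega(a)^-1, a mod p), where omega(a) == a^(p^n) mod p^(n+1)
   is the Teichmueller representative.  The image of sigma_a in G_n is the
   tau in G_n with a = tau * a^(p^n) mod p^(n+1). *)
Definition projG (p n a tau : nat) : bool :=
  (a %% p ^ n.+1 == (tau * a ^ (p ^ n)) %% p ^ n.+1)%N.

(* theta_{n,i}(phi): image of vartheta_{n+1}(phi) in R[G_n] under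
   (tau, x) |-> omega(x)^i tau. *)
Definition theta {R : comNzRingType} (p : nat) (omega : nat -> R) (n i : nat)
  (phi : modsym R) : nat -> R :=
  fun tau => if tau \in Gn p n then
    \sum_(a <- Ucal p n.+1 | projG p n a tau)
       omega (a %% p)%N ^+ i * vartheta p n.+1 phi a
  else 0.

Definition nu {R : comNzRingType} (p n : nat) (f : nat -> R) : nat -> R :=
  fun tau => if tau \in Gn p n then
    \sum_(s <- Gn p n.-1 | (tau %% p ^ n == s)%N) f s
  else 0.

Definition is_teichmuller {R : comNzRingType} (p : nat) (omega : nat -> R) : Prop :=
  [/\ forall x, omega x = omega (x %% p)%N,
      forall x y, coprime x p -> coprime y p -> omega (x * y)%N = omega x * omega y,
      forall x, coprime x p -> omega x ^+ p.-1 = 1 &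
      forall x, coprime x p -> exists r : R, omega x - x%:R = p%:R * r].

From HB Require Import structures.
From mathcomp Require Import all_boot all_order all_algebra.
From mathcomp Require Import mpoly ring.
Set Implicit Arguments. Unset Strict Implicit. Unset Printing Implicit Defensive.
Import Order.TTheory GRing.Theory Num.Theory.
Local Open Scope ring_scope.

(* First, evaluating at (0,1) turns phi|diag(p,1) at the
   cusp a/p^(n+1) into p^g times phi at p * a/p^(n+1) = a/p^n, by homogeneity,
   and phi at a/p^n only depends on a mod p^n, by invariance under the
   translations (1 k; 0 1) of Gamma_0(N).  Second, reduction mod p^n is a
   bijection from the fibre of G_(n+1) ->> G_n over tau onto the fibre of
   G_n ->> G_(n-1) over tau mod p^n, since a^(p^n) mod p^(n+1) only depends
   on a mod p^n (the Teichmueller lift is well defined). *)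

Lemma meval_dhomog_scale (R : comNzRingType) (g : nat) (P : {mpoly R[2]})
    (c : R) (w : 'I_2 -> R) :
  P \is g.-homog -> P.@[fun i => c * w i] = c ^+ g * P.@[w].
Proof.
move=> homP; rewrite !mevalE mulr_sumr; apply: eq_big_seq => m Pm.
have <- : mdeg m = g := dhomog_mf homP Pm.
rewrite mdegE -prodrXr.
under eq_bigr do rewrite exprMn.
by rewrite big_split /= mulrA [_ * \prod_i c ^+ _]mulrC -!mulrA.
Qed.

Lemma ev01_actV (R : comNzRingType) (m : mat) (P : {mpoly R[2]}) :
  ev01 (actV m P) = P.@[fun i : 'I_2 => if i == ord0 then - (mc m)%:~R else (ma m)%:~R].
Proof.
rewrite /ev01 /actV comp_mpoly_meval; apply: meval_eq => -[[|[|i]] ?] //=.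
- rewrite (tnth_nth 0) /= /Xv /Yv mevalB !mevalZ !mevalXU /=; ring.
- rewrite (tnth_nth 0) /= /Xv /Yv mevalD !mevalZ !mevalXU /=; ring.
Qed.

Definition transl (k : nat) : mat :=
  \matrix_(i < 2, j < 2) (if i == j then 1 else if i == ord0 then k%:Z else 0).

Lemma transl_Gamma0 N k : Gamma0 N (transl k).
Proof.
rewrite /Gamma0 /mc /transl mxE /= dvdz0 andbT.
rewrite (expand_det_row _ ord0) !big_ord_recl big_ord0 /cofactor !det_mx11 !mxE /=.
by rewrite !mulr0 !addr0 expr0 !mul1r.
Qed.

Lemma moeb_infty_upper (m : mat) : mc m = 0 -> moeb m infty = infty.
Proof. by rewrite /moeb => ->; rewrite eqxx. Qed.

Lemma moeb_upper (m : mat) (x : rat) : mc m = 0 -> md m = 1 ->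
  moeb m (Some x) = Some ((ma m)%:~R * x + (mb m)%:~R).
Proof. by rewrite /moeb => -> ->; rewrite mul0r add0r oner_eq0 divr1. Qed.

Lemma ev01_modsym_transl (R : comNzRingType) N g (phi : modsym R) (x : rat) (k : nat) :
  is_modsym N g phi ->
  ev01 (phi infty (Some (x + k%:R))) = ev01 (phi infty (Some x)).
Proof.
case=> _ _ inv; rewrite -[in RHS](inv _ (transl_Gamma0 N k)) ev01_actV.
rewrite moeb_infty_upper ?moeb_upper /ma /mb /mc /md ?mxE //= mul1r -pmulrn.
by rewrite /ev01; apply: meval_eq => i; rewrite oppr0.
Qed.

Lemma ev01_slash_diagp1 (R : comNzRingType) N g (phi : modsym R) (p : nat) (x : rat) :
  is_modsym N g phi ->
  ev01 (slash phi (diagp1 p) infty (Some x))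
  = (p ^ g)%:R * ev01 (phi infty (Some (p%:R * x))).
Proof.
case=> homP _ _; rewrite /slash ev01_actV.
rewrite moeb_infty_upper ?moeb_upper /ma /mb /mc /md ?mxE //= addr0 -pmulrn.
rewrite natrX -(meval_dhomog_scale _ _ (homP _ _)) /ev01; apply: meval_eq => i.
by case: ifP; rewrite ?oppr0 ?mulr0 ?mulr1.
Qed.

Lemma mulp_cusp (p m a : nat) : (0 < p)%N ->
  (p%:R * (a%:R / (p ^ m.+1)%:R) : rat)
  = (a %% p ^ m)%:R / (p ^ m)%:R + (a %/ p ^ m)%:R.
Proof.
move=> p_gt0.
have pm_neq0 : ((p ^ m)%:R != 0 :> rat) by rewrite pnatr_eq0 -lt0n expn_gt0 p_gt0.
have p_neq0 : (p%:R != 0 :> rat) by rewrite pnatr_eq0 -lt0n.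
rewrite {1}(divn_eq a (p ^ m)) expnSr !natrD !natrM.
by field; rewrite pm_neq0 p_neq0.
Qed.

Section Residues.
Local Open Scope nat_scope.
Variable p : nat.

(* Only (t m)^1 survives mod m p in the binomial expansion, with coefficient p. *)
Lemma expn_addmul_mod (m x t : nat) : p %| m -> (x + t * m) ^ p = x ^ p %[mod m * p].
Proof.
move=> dvd_pm; rewrite expnDn big_ord_recl /= bin0 subn0 expn0 mul1n muln1.
have : m * p %| \sum_(i < p) 'C(p, bump 0 i) * (x ^ (p - bump 0 i) * (t * m) ^ bump 0 i).
  apply: dvdn_sum => -[[|j] lt_j] _ /=.
    rewrite bin1 expn1 [m * p]mulnC.
    by apply: dvdn_mul => //; do 2 apply: dvdn_mull.
  do 2 apply: dvdn_mull.
  rewrite !expnS mulnA; apply: dvdn_mulr; apply: dvdn_mul; exact: dvdn_mull.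
by case/dvdnP=> k ->; rewrite addnC modnMDl.
Qed.

Lemma expn_congr_mod (m y z : nat) : p %| m -> y = z %[mod m] -> y ^ p = z ^ p %[mod m * p].
Proof.
move=> dvd_pm yz.
have := expn_addmul_mod (y %% m) (y %/ m) dvd_pm; rewrite addnC -divn_eq => ->.
have := expn_addmul_mod (z %% m) (z %/ m) dvd_pm; rewrite addnC -divn_eq => ->.
by rewrite yz.
Qed.

Lemma expn_pexp_congr (n x y : nat) : x = y %[mod p] -> x ^ (p ^ n) = y ^ (p ^ n) %[mod p ^ n.+1].
Proof.
move=> xy; elim: n => [|n IHn]; first by rewrite !expn0 !expn1.
rewrite (expnSr p n.+1) (expnSr p n) !expnM -(expnSr p n).
by apply: expn_congr_mod => //; apply: dvdn_exp.
Qed.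

Lemma congr_mod_pexp (k a b : nat) : 0 < k -> a = b %[mod p ^ k] -> a = b %[mod p].
Proof.
move=> k_gt0 ab; have dvd_p : p %| p ^ k by rewrite dvdn_exp.
by rewrite -(modn_dvdm a dvd_p) -(modn_dvdm b dvd_p) ab.
Qed.

Hypothesis p_prime : prime p.

Lemma teichmuller_congr (m a : nat) : a ^ (p ^ m.+1) = a ^ (p ^ m) %[mod p ^ m.+1].
Proof. by have := expn_pexp_congr m (fermat_little a p_prime); rewrite -expnM -expnS. Qed.

Let p_gt0 : 0 < p. Proof. exact: prime_gt0. Qed.

Lemma mem_Ucal k a : (a \in Ucal p k) = (a < p ^ k) && coprime a (p ^ k).
Proof. by rewrite mem_filter mem_iota add0n andbC. Qed.

Lemma uniq_Ucal k : uniq (Ucal p k).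
Proof. exact: filter_uniq (iota_uniq _ _). Qed.

Lemma Ucal_coprime k a : a \in Ucal p k.+1 -> coprime a p.
Proof. by rewrite mem_Ucal coprime_pexpr // => /andP[]. Qed.

Lemma Ucal_modn k a : a \in Ucal p k.+1 -> a %% p ^ k \in Ucal p k.
Proof.
move=> Ua; rewrite mem_Ucal ltn_pmod ?expn_gt0 ?p_gt0 //= coprime_modl.
by case: k Ua => [|k] Ua; rewrite ?coprimen1 // coprime_pexpr // (Ucal_coprime Ua).
Qed.

Lemma Gn_modn m tau : tau \in Gn p m.+1 -> tau %% p ^ m.+1 \in Gn p m.
Proof.
rewrite /Gn mem_filter => /andP[tau_p1 Utau].
by rewrite mem_filter (Ucal_modn Utau) andbT modn_dvdm ?dvdn_exp.
Qed.

Lemma projG_inj m tau a b : a < p ^ m.+2 -> b < p ^ m.+2 ->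
  projG p m.+1 a tau -> projG p m.+1 b tau -> a %% p ^ m.+1 = b %% p ^ m.+1 -> a = b.
Proof.
move=> lt_a lt_b /eqP pa /eqP pb ab.
rewrite -(modn_small lt_a) -(modn_small lt_b) pa pb -modnMmr.
by rewrite (expn_pexp_congr m.+1 (congr_mod_pexp (ltn0Sn m) ab)) modnMmr.
Qed.

Lemma projG_modn m tau a : projG p m.+1 a tau ->
  projG p m (a %% p ^ m.+1) (tau %% p ^ m.+1).
Proof.
move=> /eqP pa; have dvd_q : p ^ m.+1 %| p ^ m.+2 by rewrite dvdn_exp2l.
apply/eqP; rewrite [in RHS]modnMml -[in RHS]modnMmr modnXm modnMmr.
rewrite modn_mod -(modn_dvdm a dvd_q) pa modn_dvdm //.
by rewrite -modnMmr teichmuller_congr modnMmr.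
Qed.

(* The lift of b is tau * omega(b), omega(b) = b^(p^(m+1)) mod p^(m+2). *)
Lemma projG_lift m tau b : coprime tau p -> b \in Ucal p m.+1 ->
  projG p m b (tau %% p ^ m.+1) ->
  let a := tau * b ^ (p ^ m.+1) %% p ^ m.+2 in
  [/\ a \in Ucal p m.+2, projG p m.+1 a tau & a %% p ^ m.+1 = b].
Proof.
move=> tau_p Ub /eqP pb a; have dvd_q : p ^ m.+1 %| p ^ m.+2 by rewrite dvdn_exp2l.
have lt_b : b < p ^ m.+1 by move: Ub; rewrite mem_Ucal => /andP[].
have a_q : a %% p ^ m.+1 = b.
  rewrite /a modn_dvdm // -modnMmr teichmuller_congr modnMmr -modnMml.
  by rewrite -[RHS](modn_small lt_b) pb.
split=> //.
  rewrite mem_Ucal ltn_pmod ?expn_gt0 ?p_gt0 //= coprime_modl coprime_pexpr //.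
  by rewrite coprimeMl tau_p coprimeXl // (Ucal_coprime Ub).
have ab : a = b %[mod p] by apply: (@congr_mod_pexp m.+1); rewrite // a_q modn_small.
by apply/eqP; rewrite modn_mod -modnMmr -[RHS]modnMmr (expn_pexp_congr m.+1 ab).
Qed.

Lemma perm_fibre_modn m tau : coprime tau p ->
  perm_eq [seq a %% p ^ m.+1 | a <- [seq a <- Ucal p m.+2 | projG p m.+1 a tau]]
          [seq b <- Ucal p m.+1 | projG p m b (tau %% p ^ m.+1)].
Proof.
move=> tau_p; apply: uniq_perm; last 1 first.
- move=> b; apply/mapP/idP.
  + case=> a; rewrite mem_filter => /andP[pa Ua] ->.
    by rewrite mem_filter projG_modn // Ucal_modn.
  + rewrite mem_filter => /andP[pb Ub]; have [Ua pa a_q] := projG_lift tau_p Ub pb.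
    by eexists; last exact/esym/a_q; rewrite mem_filter pa Ua.
- rewrite map_inj_in_uniq; first exact: filter_uniq (uniq_Ucal _).
  move=> a b; rewrite mem_filter => /andP[pa]; rewrite mem_Ucal => /andP[lt_a _].
  rewrite mem_filter => /andP[pb]; rewrite mem_Ucal => /andP[lt_b _].
  exact: (projG_inj lt_a lt_b pa pb).
- exact: filter_uniq (uniq_Ucal _).
Qed.

Lemma big_fibre_modn (R : comNzRingType) m tau (F : nat -> R) : coprime tau p ->
  (\sum_(a <- Ucal p m.+2 | projG p m.+1 a tau) F (a %% p ^ m.+1)%N)%R
  = (\sum_(b <- Ucal p m.+1 | projG p m b (tau %% p ^ m.+1)) F b)%R.
Proof.
move=> tau_p; rewrite -big_filter -[RHS]big_filter -(big_map (modn^~ _) xpredT).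
exact/perm_big/perm_fibre_modn.
Qed.

Lemma nu_Gn (R : comNzRingType) m (f : nat -> R) tau : tau \in Gn p m.+1 ->
  nu p m.+1 f tau = f (tau %% p ^ m.+1).
Proof.
move=> Gtau; rewrite /nu Gtau /= -big_filter.
have uniq_Gn : uniq (Gn p m) by apply: filter_uniq; apply: uniq_Ucal.
rewrite (eq_filter (a2 := pred1 (tau %% p ^ m.+1))) => [|s]; last by rewrite /= eq_sym.
by rewrite filter_pred1_uniq ?Gn_modn // big_seq1.
Qed.

End Residues.

Lemma vartheta_slash_diagp1 (R : comNzRingType) p N g (phi : modsym R) m a :
  prime p -> is_modsym N g phi -> a \in Ucal p m.+2 ->
  vartheta p m.+2 (slash phi (diagp1 p)) a
  = (p ^ g)%:R * vartheta p m.+1 phi (a %% p ^ m.+1)%N.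
Proof.
move=> p_prime phiP Ua; rewrite /vartheta Ua Ucal_modn //.
rewrite (ev01_slash_diagp1 _ _ phiP) mulp_cusp ?prime_gt0 //.
by rewrite (ev01_modsym_transl _ _ phiP).
Qed.

Theorem lemma2p6 (p : nat) (R : comNzRingType) (omega : nat -> R) (N g : nat)
  (phi : modsym R) :
  prime p -> odd p -> (0 < N)%N -> is_teichmuller p omega ->
  is_modsym N g phi ->
  forall n i : nat, (1 <= n)%N -> (i <= p - 2)%N ->
  forall tau : nat,
    theta p omega n i (slash phi (diagp1 p)) tau
    = (p ^ g)%:R * nu p n (theta p omega n.-1 i phi) tau.
Proof.
move=> p_prime _ _ _ phiP [|m] // i _ _ tau.
have [Gtau|Gtau] := boolP (tau \in Gn p m.+1); last first.
  by rewrite /theta /nu (negbTE Gtau) mulr0.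
rewrite nu_Gn // /theta Gtau Gn_modn //=.
have tau_p : coprime tau p by move: Gtau; rewrite mem_filter => /andP[_ /Ucal_coprime->].
pose F b := omega (b %% p)%N ^+ i * vartheta p m.+1 phi b.
rewrite -[X in _ * X](big_fibre_modn p_prime m F tau_p) mulr_sumr.
rewrite [LHS]big_seq_cond [RHS]big_seq_cond; apply: eq_bigr => a /andP[Ua _].
by rewrite (vartheta_slash_diagp1 p_prime phiP Ua) /F modn_dvdm ?dvdn_exp // mulrCA.
Qed.
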